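(* For each integer $k\ge1$, the function $F_k:(\tfrac12,\tfrac34)\to\mathbb{R}_+$, $F_k(h)=\rho_h(k)$, is increasing. Consequently $\lim_{h\to\frac12+}\sum_{k=1}^\infty\rho_h^2(k)=0$.
   Context: $\rho_h(k)=\frac12\big((k+1)^{2h}+(k-1)^{2h}-2k^{2h}\big)$. *)

From HB Require Import structures.
From mathcomp Require Import all_boot all_order all_algebra.
From mathcomp Require Import all_classical all_reals all_analysis.
Set Implicit Arguments. Unset Strict Implicit. Unset Printing Implicit Defensive.
Import Order.TTheory GRing.Theory Num.Theory.
Local Open Scope ring_scope.

(* rho_h(k) = 1/2 ((k+1)^{2h} + (k-1)^{2h} - 2 k^{2h}), with real powers powR
   (note 0 `^ x = 0 for x > 0, so for k = 1 the middle term vanishes). *)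
Definition rho (R : realType) (h : R) (k : nat) : R :=
  2^-1 * ((k.+1%:R) `^ (2 * h) + (k.-1%:R) `^ (2 * h) - 2 * (k%:R `^ (2 * h))).

From HB Require Import structures.
From mathcomp Require Import all_boot all_order all_algebra.
From mathcomp Require Import all_classical all_reals all_analysis.
From mathcomp Require Import ring lra.
Set Implicit Arguments.
Unset Strict Implicit.
Unset Printing Implicit Defensive.
Import Order.TTheory GRing.Theory Num.Theory.
Import numFieldNormedType.Exports.
Local Open Scope ring_scope.
Local Open Scope classical_set_scope.

(* For k >= 2, rho_h(k) is half the second difference of x |-> x^(2h) at k, so by the
   mean value theorem it equals h (2h-1) eta^(2h-2) s for some eta in (k-1, k+1) and
   s in (0, 2).  For 1/2 <= h1 < h2 the second derivative of x^(2h2) - x^(2h1) is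
   positive on [1, +oo), which gives monotonicity in h; rho_h(1) = 2^(2h-1) - 1 is
   monotone directly, and rho_(1/2) = 0 then gives positivity.  For h <= 5/8 the same
   formula yields rho_h(k) <= 3 (2h-1) k^(-3/4), so the squares sum to at most
   27 (2h-1)^2, because the series of k^(-3/2) is bounded by 3 (telescoping against
   k^(-1/2)); this bound vanishes as h -> 1/2. *)

Section second_difference.
Variable R : realType.
Implicit Types (f df ddf : R -> R) (a b c : R).

Definition secdiff f c := f (c + 1) + f (c - 1) - 2 * f c.

Lemma MVT_closed f df a b : a < b ->
  {in `[a, b]%R, forall x : R, is_derive x 1 f (df x)} ->
  exists2 x, a < x < b & f b - f a = df x * (b - a).
Proof.
move=> ab fd; have [||x xab ->] := @MVT R f df a b ab.
- by move=> x xab; apply/fd/subset_itv_oo_cc.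
- by apply: (@derivable_within_continuous R R f) => x /fd [].
by exists x; rewrite in_itv /= in xab.
Qed.

Lemma secdiff_MVT f df ddf c :
  {in `[c - 1, c + 1]%R, forall x : R, is_derive x 1 f (df x)} ->
  {in `[c - 1, c + 1]%R, forall x : R, is_derive x 1 df (ddf x)} ->
  exists2 eta, c - 1 < eta < c + 1 & exists2 s, 0 < s < 2 & secdiff f c = ddf eta * s.
Proof.
move=> fd dfd.
have sub u v x : c - 1 <= u -> v <= c + 1 -> x \in `[u, v]%R -> x \in `[c - 1, c + 1]%R.
  by rewrite !in_itv /= => cu vc /andP[ux xv]; rewrite (le_trans cu ux) (le_trans xv vc).
have [x1 /andP[cx1 x1c] E1] : exists2 x1, c < x1 < c + 1 & f (c + 1) - f c = df x1 * (c + 1 - c).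
  by apply: MVT_closed => [|x /(sub c (c + 1)) xI]; [lra | apply/fd/xI; lra].
have [x2 /andP[cx2 x2c] E2] : exists2 x2, c - 1 < x2 < c & f c - f (c - 1) = df x2 * (c - (c - 1)).
  by apply: MVT_closed => [|x /(sub (c - 1) c) xI]; [lra | apply/fd/xI; lra].
have [eta /andP[x2eta etax1] E3] : exists2 eta, x2 < eta < x1 & df x1 - df x2 = ddf eta * (x1 - x2).
  by apply: MVT_closed => [|x /(sub x2 x1) xI]; [lra | apply/dfd/xI; lra].
exists eta; first lra.
exists (x1 - x2); first lra.
have -> : secdiff f c = (f (c + 1) - f c) - (f c - f (c - 1)) by rewrite /secdiff; ring.
by rewrite E1 E2 -E3; ring.
Qed.

Lemma secdiff_gt0 f df ddf c :
  {in `[c - 1, c + 1]%R, forall x : R, is_derive x 1 f (df x)} ->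
  {in `[c - 1, c + 1]%R, forall x : R, is_derive x 1 df (ddf x)} ->
  {in `]c - 1, c + 1[%R, forall x, 0 < ddf x} -> 0 < secdiff f c.
Proof.
move=> fd dfd ddf_gt0; have [eta etaI [s /andP[s0 _] ->]] := @secdiff_MVT f df ddf c fd dfd.
by rewrite mulr_gt0 // ddf_gt0 // in_itv.
Qed.

Lemma secdiff_le f df ddf c M :
  {in `[c - 1, c + 1]%R, forall x : R, is_derive x 1 f (df x)} ->
  {in `[c - 1, c + 1]%R, forall x : R, is_derive x 1 df (ddf x)} ->
  0 <= M -> {in `]c - 1, c + 1[%R, forall x, ddf x <= M} -> secdiff f c <= 2 * M.
Proof.
move=> fd dfd M0 ddf_le; have [eta etaI [s /andP[s0 s2] ->]] := @secdiff_MVT f df ddf c fd dfd.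
have ddfM : ddf eta <= M by apply: ddf_le; rewrite in_itv.
nra.
Qed.

Lemma secdiffB f g c : secdiff (fun x => f x - g x) c = secdiff f c - secdiff g c.
Proof. by rewrite /secdiff; ring. Qed.

End second_difference.

Section powers.
Variable R : realType.
Implicit Types (a b c r s t x y : R).

Lemma is_derive_powR_derive a x : 0 < x ->
  is_derive x 1 (fun y => a * y `^ (a - 1)) (a * (a - 1) * x `^ (a - 2)).
Proof.
move=> x0; rewrite -mulrA (_ : a - 2 = a - 1 - 1); last by ring.
exact: is_deriveZ (is_derive1_powR _ x0).
Qed.

Lemma ler_powRN r x y : 0 < x -> x <= y -> 0 <= r -> y `^ (- r) <= x `^ (- r).
Proof.
move=> x0 xy r0; have y0 := lt_le_trans x0 xy.
rewrite !powRN lef_pV2 ?posrE ?powR_gt0 //.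
by apply: ge0_ler_powR => //; rewrite nnegrE ltW.
Qed.

Lemma powRN_half_le r x : 0 < x -> 0 <= r <= 1 -> (x / 2) `^ (- r) <= 2 * x `^ (- r).
Proof.
move=> x0 /andP[r0 r1]; rewrite powRM ?(ltW x0) ?invr_ge0 // mulrC ler_wpM2r ?powR_ge0 //.
rewrite -powR_inv1 // -powRrM mulN1r opprK.
by rewrite -[leRHS]powRr1 // ler_powR // ler1n.
Qed.

Lemma ln2_le1 : ln (2 : R) <= 1.
Proof. by have := expR_ge1Dx (ln (2 : R)); rewrite lnK ?posrE //; lra. Qed.

Lemma expRB1_le t : 0 <= t <= 2^-1 -> expR t - 1 <= 2 * t.
Proof.
move=> /andP[t0 t2]; have Et0 := expR_gt0 t.
have Et_inv : expR t * expR (- t) = 1 by rewrite -expRD subrr expR0.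
have : 1 - t <= expR (- t) by have := expR_ge1Dx (- t); lra.
move=> /(ler_wpM2l (ltW Et0)); rewrite Et_inv => Et.
have Et2 : expR t <= 2 by nra.
nra.
Qed.

Lemma powR2B1_le t : 0 <= t <= 2^-1 -> 2 `^ t - 1 <= 2 * t.
Proof.
move=> /andP[t0 t2]; rewrite /powR pnatr_eq0 /=.
have ln2_gt0 : 0 < ln (2 : R) by rewrite ln_gt0 // ltr1n.
have ln2_le := ln2_le1.
have /expRB1_le : 0 <= t * ln 2 <= 2^-1 by apply/andP; split; nra.
nra.
Qed.

Lemma ltr_powR a r s : 1 < a -> r < s -> a `^ r < a `^ s.
Proof. by move=> a1 rs; rewrite /powR gt_eqF ?(lt_trans ltr01) // ltr_expR ltr_pM2r // ln_gt0. Qed.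

Lemma powR_derive2_lt a b x : 1 <= a < b -> 1 <= x ->
  a * (a - 1) * x `^ (a - 2) < b * (b - 1) * x `^ (b - 2).
Proof.
move=> /andP[a1 ab] x1.
have xa_gt0 : 0 < x `^ (a - 2) by rewrite powR_gt0 // (lt_le_trans ltr01).
have xab : x `^ (a - 2) <= x `^ (b - 2) by apply: ler_powR; lra.
have ab2 : 0 <= a * (a - 1) < b * (b - 1) by apply/andP; split; nra.
set X := x `^ _ in xa_gt0 xab *; set Y := x `^ _ in xab *.
set P := a * _ in ab2 *; set Q := b * _ in ab2 *; nra.
Qed.

Lemma powR_derive2_le a c x : 1 <= a <= 5/4 -> 2 <= c -> c - 1 <= x ->
  a * (a - 1) * x `^ (a - 2) <= 3 * (a - 1) * c `^ (- (3/4)).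
Proof.
move=> /andP[a1 a54] c2 cx.
have c0 : 0 < c by lra.
have x_pow : x `^ (a - 2) <= 2 * c `^ (- (3/4)).
  apply: (@le_trans _ _ (x `^ (- (3/4)))); first by apply: ler_powR; lra.
  apply: (@le_trans _ _ ((c / 2) `^ (- (3/4)))); first by apply: ler_powRN; lra.
  by apply: powRN_half_le; lra.
have C0 := powR_ge0 c (- (3/4)).
have aa : 0 <= a * (a - 1) <= 5/4 * (a - 1) by apply/andP; split; nra.
apply: le_trans (_ : a * (a - 1) * (2 * c `^ (- (3/4))) <= _); first by rewrite ler_wpM2l //; lra.
have : 0 <= (a - 1) * c `^ (- (3/4)) by rewrite mulr_ge0 // subr_ge0.
set C := c `^ _ in C0 *; set P := a * (a - 1) in aa *; nra.
Qed.

End powers.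

Section rho_monotone.
Variable R : realType.
Implicit Types (h : R) (k : nat).

Lemma rho_secdiff h k : (1 <= k)%N -> rho h k = 2^-1 * secdiff (fun x => x `^ (2 * h)) k%:R.
Proof. by case: k => // k _; rewrite /rho /secdiff natr1 -[in _ - 1]natr1 addrK. Qed.

Lemma rho1 h : 0 < h -> rho h 1 = 2 `^ (2 * h - 1) - 1.
Proof.
move=> h0; rewrite /rho /= powR0 ?mulf_neq0 ?gt_eqF // powR1.
by rewrite powRB ?pnatr_eq0 ?implybT // powRr1 //; field.
Qed.

Lemma rho_half k : (1 <= k)%N -> rho (2^-1 : R) k = 0.
Proof.
move=> k1; rewrite rho_secdiff // mulfV ?pnatr_eq0 // /secdiff.
rewrite !powRr1 ?subr_ge0 ?ler1n ?addr_ge0 //; ring.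
Qed.

Let powR_derive_on a c : 1 < c ->
  {in `[c - 1, c + 1]%R, forall x : R, is_derive x 1 (fun y => y `^ a) (a * x `^ (a - 1))}.
Proof. by move=> c1 x; rewrite in_itv /= => /andP[cx _]; apply: is_derive1_powR; lra. Qed.

Let powR_derive2_on a c : 1 < c ->
  {in `[c - 1, c + 1]%R, forall x : R,
    is_derive x 1 (fun y => a * y `^ (a - 1)) (a * (a - 1) * x `^ (a - 2))}.
Proof. by move=> c1 x; rewrite in_itv /= => /andP[cx _]; apply: is_derive_powR_derive; lra. Qed.

Lemma rho_lt h1 h2 k : (1 <= k)%N -> 2^-1 <= h1 -> h1 < h2 -> rho h1 k < rho h2 k.
Proof.
move=> k1 h1_ge h12; case: k k1 => [//|[_|k _]].
  by rewrite !rho1 ?ltrD2r ?ltr_powR ?ltr1n //; lra.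
set c : R := k.+2%:R; have c2 : 2 <= c by rewrite ler_nat.
rewrite -subr_gt0 !rho_secdiff // -mulrBr pmulr_rgt0 // -secdiffB.
apply: (@secdiff_gt0 _ _
    (fun x => 2 * h2 * x `^ (2 * h2 - 1) - 2 * h1 * x `^ (2 * h1 - 1))
    (fun x => 2 * h2 * (2 * h2 - 1) * x `^ (2 * h2 - 2)
            - 2 * h1 * (2 * h1 - 1) * x `^ (2 * h1 - 2))).
- by move=> x xI; apply: is_deriveB; apply: powR_derive_on xI; lra.
- by move=> x xI; apply: is_deriveB; apply: powR_derive2_on xI; lra.
- move=> x; rewrite in_itv /= subr_gt0 => /andP[cx _].
  by apply: powR_derive2_lt; lra.
Qed.

Lemma rho_ge0 h k : (1 <= k)%N -> 2^-1 <= h -> 0 <= rho h k.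
Proof.
move=> k1; rewrite le_eqVlt => /predU1P[<-|h_gt]; first by rewrite rho_half.
by rewrite -(rho_half k1) ltW // rho_lt.
Qed.

Lemma rho_le h k : (1 <= k)%N -> 2^-1 <= h <= 5/8 ->
  rho h k <= 3 * (2 * h - 1) * k%:R `^ (- (3/4)).
Proof.
move=> k1 /andP[h_ge h_le]; case: k k1 => [//|[_|k _]].
  rewrite rho1 ?powR1 ?mulr1; last lra.
  have : 2 `^ (2 * h - 1) - 1 <= 2 * (2 * h - 1) by apply: powR2B1_le; lra.
  lra.
set c : R := k.+2%:R; have c2 : 2 <= c by rewrite ler_nat.
rewrite rho_secdiff // ler_pdivrMl //.
apply: secdiff_le (powR_derive_on _ _) (powR_derive2_on _ _) _ _; [lra | lra | |].
  by rewrite !mulr_ge0 ?powR_ge0 //; lra.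
move=> x; rewrite in_itv /= => /andP[cx _].
by apply: powR_derive2_le; lra.
Qed.

End rho_monotone.

Section series.
Variable R : realType.
Implicit Types (h x : R) (n : nat).

Lemma powRN32_le_telescope x : 1 <= x ->
  (x + 1) `^ (- (3/2)) <= 2 * (x `^ (- 2^-1) - (x + 1) `^ (- 2^-1)).
Proof.
move=> x1.
have [y /andP[xy yx] E] : exists2 y, x < y < x + 1 &
    (x + 1) `^ (- 2^-1) - x `^ (- 2^-1) = - 2^-1 * y `^ (- 2^-1 - 1) * (x + 1 - x).
  apply: (MVT_closed (f := fun y => y `^ (- 2^-1))); first lra.
  by move=> y; rewrite in_itv /= => /andP[xy _]; apply: is_derive1_powR; lra.
rewrite (_ : - 2^-1 - 1 = - (3/2)) in E; last by field.
rewrite (_ : x + 1 - x = 1) ?mulr1 in E; last by ring.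
have : (x + 1) `^ (- (3/2)) <= y `^ (- (3/2)) by apply: ler_powRN; lra.
lra.
Qed.

Lemma sum_powRN32_le n : \sum_(1 <= k < n) k%:R `^ (- (3/2)) <= 3 :> R.
Proof.
suff sum_le m : \sum_(1 <= k < m.+2) k%:R `^ (- (3/2)) <= 3 - 2 * m.+1%:R `^ (- 2^-1) :> R.
  case: n => [|[|m]]; [by rewrite big_geq | by rewrite big_geq |].
  by rewrite (le_trans (sum_le m)) // lerBlDr lerDl mulr_ge0 ?powR_ge0.
elim: m => [|m IH]; first by rewrite big_nat1 powR1; lra.
rewrite big_nat_recr //=.
have := powRN32_le_telescope (ler1n R m.+1); rewrite !natr1.
lra.
Qed.

Lemma sum_rho_sq_le h n : 2^-1 <= h <= 5/8 ->
  \sum_(1 <= k < n) rho h k ^+ 2 <= 27 * (2 * h - 1) ^+ 2.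
Proof.
move=> /andP[h_ge h_le].
apply: (@le_trans _ _ (\sum_(1 <= k < n) 9 * (2 * h - 1) ^+ 2 * k%:R `^ (- (3/2)))).
  rewrite big_nat [leRHS]big_nat ler_sum // => k /andP[k1 _].
  have K2 : k%:R `^ (- (3/4)) ^+ 2 = k%:R `^ (- (3/2)) :> R.
    by rewrite -powR_mulrn ?powR_ge0 // -powRrM; congr (_ `^ _); field.
  rewrite -K2 (_ : 9 * _ * _ = (3 * (2 * h - 1) * k%:R `^ (- (3/4))) ^+ 2); last by ring.
  rewrite ler_sqr ?nnegrE ?rho_ge0 ?rho_le ?h_ge ?h_le //.
  by rewrite !mulr_ge0 ?powR_ge0 //; lra.
rewrite -mulr_sumr.
have E0 : 0 <= 9 * (2 * h - 1) ^+ 2 :> R by rewrite mulr_ge0 ?sqr_ge0.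
by apply: le_trans (ler_wpM2l E0 (sum_powRN32_le n)) _; lra.
Qed.

Lemma limn_sum_rho_sq_le h : 2^-1 <= h <= 5/8 ->
  0 <= limn (fun n => \sum_(1 <= k < n) rho h k ^+ 2) <= 27 * (2 * h - 1) ^+ 2.
Proof.
move=> hI; set u := fun n => _.
have u_nd : nondecreasing_seq u.
  apply/nondecreasing_seqP => n; rewrite /u.
  case: n => [|n]; first by rewrite !big_geq.
  by rewrite [leRHS]big_nat_recr //= lerDl sqr_ge0.
have u_cvg : cvgn u.
  apply: nondecreasing_is_cvgn u_nd _.
  by exists (27 * (2 * h - 1) ^+ 2) => _ [n _ <-]; exact: sum_rho_sq_le.
apply/andP; split.
- by apply: limr_ge => //; near=> n; apply: sumr_ge0 => k _; exact: sqr_ge0.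
- by apply: limr_le => //; near=> n; exact: sum_rho_sq_le.
Unshelve. all: by end_near.
Qed.

End series.

Theorem lemmaA3 (R : realType) :
  (forall k : nat, (1 <= k)%N ->
     (forall h : R, 2^-1 < h < 3/4 -> 0 <= rho h k) /\
     (forall h1 h2 : R, 2^-1 < h1 -> h1 < h2 -> h2 < 3/4 -> rho h1 k < rho h2 k)) /\
  ((fun h : R => limn (fun n => \sum_(1 <= k < n) (rho h k) ^+ 2)) x @[x --> (2^-1 : R)^'+] --> (0 : R)).
Proof.
split=> [k k1|].
  split=> [h /andP[h_gt _]|h1 h2 h1_gt h12 _].
  - by apply: rho_ge0; rewrite ?ltW.
  - by apply: rho_lt; rewrite ?ltW.
have bound_cvg0 : 27 * (2 * x - 1) ^+ 2 @[x --> (2^-1 : R)^'+] --> (0 : R).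
  apply: cvg_at_right_filter.
  rewrite (_ : 0 = 27 * (2 * 2^-1 - 1) ^+ 2); last by rewrite mulfV // subrr expr0n mulr0.
  have lin : (2 * x - 1) @[x --> (2^-1 : R)] --> (2 * 2^-1 - 1 : R).
    by apply: cvgB; [apply: cvgM => //; exact: cvg_cst | exact: cvg_cst].
  apply: cvgM; first exact: cvg_cst.
  by rewrite expr2; under eq_fun do rewrite expr2; apply: cvgM; exact: lin.
apply: squeeze_cvgr bound_cvg0; last exact: cvg_cst.
near=> h; apply: limn_sum_rho_sq_le; apply/andP; split.
- by apply: ltW; near: h; exact: nbhs_right_gt.
- by near: h; apply: nbhs_right_le; lra.
Unshelve. all: by end_near.
Qed.
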